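(* Let $p$ be a positive integer and $n>0$ an integer such that $\mathcal{S}_{p,n}:=p^2 16^n+1$ is prime. Let $E/\mathbb{F}_{\mathcal{S}_{p,n}}$ be the elliptic curve $y^2=x^3-x$. Then $\#E(\mathbb{F}_{\mathcal{S}_{p,n}})=p^2 16^n$. *)

From HB Require Import structures.
From mathcomp Require Import all_boot all_order all_algebra all_field.
Set Implicit Arguments. Unset Strict Implicit. Unset Printing Implicit Defensive.
Import GRing.Theory.
Local Open Scope ring_scope.

(* The set of F-rational points of the (short Weierstrass) curve
   y^2 = x^3 + a x + b in projective coordinates: [None] is the point at
   infinity O, [Some (x, y)] is an affine point. *)
Definition ec_points (F : finFieldType) (a b : F) : {set option (F * F)} :=
  [set P | if P is Some (x, y) then y ^+ 2 == x ^+ 3 + a * x + b else true].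

From HB Require Import structures.
From mathcomp Require Import all_boot all_order all_algebra all_field.
From mathcomp Require Import zify ring.
Set Implicit Arguments. Unset Strict Implicit. Unset Printing Implicit Defensive.
Import GRing.Theory Num.Theory Order.TTheory.
Local Open Scope ring_scope.

(* Let q = #|F| = 2m + 1 and let chi be the quadratic character of F.  Counting
   square roots gives #E = q + 1 + J(-1), where J(a) = sum_x chi(x) chi(x^2 + a)
   is a Jacobsthal sum.  Orthogonality of chi gives sum_a J(a)^2 = 2q(q - 1), and
   J(a c^2) = chi(c) J(a), so J(-1)^2 + J(r)^2 = 4q for any non-square r.  On the
   other hand J(-1) = q - 3 - 2N, where N counts the x with chi(x^3 - x) = -1;
   these come in orbits {x, -x, 1/x, -1/x} of size 4, so J(-1) = -2 mod 8 when
   q = 1 mod 8.  As q = 1 + b^2 is a prime with b even, the uniqueness of its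
   representation as a sum of two squares forces J(-1) = -2, i.e. #E = q - 1. *)

Lemma Euclid_dvdzM (q : nat) (u v : int) :
  prime q -> (q%:Z %| u * v)%Z = (q%:Z %| u)%Z || (q%:Z %| v)%Z.
Proof. by move=> q_pr; rewrite !dvdzE abszM Euclid_dvdM. Qed.

Lemma prime_sum_sqr_uniq (q : nat) (b A t : int) : prime q ->
  q%:Z = 1 + b ^+ 2 -> q%:Z = A ^+ 2 + t ^+ 2 -> A ^+ 2 = 1 \/ t ^+ 2 = 1.
Proof.
move=> q_pr qb; wlog q_dvd : t / (q%:Z %| A * b - t)%Z => [wlog_t qA | qA].
  have : (q%:Z %| (A * b - t) * (A * b + t))%Z.
    have -> : (A * b - t) * (A * b + t) = A ^+ 2 * (1 + b ^+ 2) - (A ^+ 2 + t ^+ 2).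
      by ring.
    by rewrite -qb -qA -{2}[q%:Z]mul1r -mulrBl dvdz_mull.
  rewrite Euclid_dvdzM // => /orP[q_dvd | q_dvd]; first exact: wlog_t.
  by have := wlog_t (- t); rewrite opprK sqrrN; apply.
have q_neq0 : q%:Z != 0 by rewrite eqz_nat -lt0n prime_gt0.
have [k Abt] := dvdzP q_dvd.
have brahmagupta : (k * q%:Z) ^+ 2 + (A + t * b) ^+ 2 = q%:Z ^+ 2.
  by rewrite -Abt [RHS]expr2 {1}qb qA; ring.
have [k0 | At] : k = 0 \/ A + t * b = 0.
  have [-> | k_neq0] := eqVneq k 0; [by left | right].
  apply/eqP; rewrite -sqrf_eq0 eq_le sqr_ge0 andbT.
  have -> : (A + t * b) ^+ 2 = q%:Z ^+ 2 * (1 - k ^+ 2).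
    by apply: (addrI ((k * q%:Z) ^+ 2)); rewrite brahmagupta; ring.
  by rewrite mulr_ge0_le0 ?sqr_ge0 // subr_le0 sqr_intr_ge1.
- left; apply: (mulIf q_neq0); rewrite mul1r {2}qA.
  move: Abt; rewrite k0 mul0r => /eqP; rewrite subr_eq0 => /eqP <-.
  rewrite qb; ring.
- right; apply: (mulIf q_neq0); rewrite mul1r {2}qA.
  move/eqP: At; rewrite addr_eq0 => /eqP ->.
  rewrite qb; ring.
Qed.

Lemma sum_sqr_4prime_eqN2 (q : nat) (c S T K : int) : prime q ->
  q%:Z = 1 + (2 * c) ^+ 2 -> S ^+ 2 + T ^+ 2 = 4 * q%:Z -> S = 8 * K - 2 -> S = -2.
Proof.
move=> q_pr qc ST SK; rewrite {S}SK in ST *.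
have [t Tt] : exists t, T = t * 2.
  apply/dvdzP; rewrite -(orbb (2%:Z %| T)%Z) -Euclid_dvdzM //; apply/dvdzP.
  exists (2 * q%:Z - 2 * (4 * K - 1) ^+ 2); rewrite -expr2.
  by apply: (addrI ((8 * K - 2) ^+ 2)); rewrite ST; ring.
rewrite {T}Tt in ST.
have qA : q%:Z = (4 * K - 1) ^+ 2 + t ^+ 2.
  by apply: (@mulfI _ 4) => //; rewrite -ST; ring.
have [/eqP | /eqP t2] := prime_sum_sqr_uniq q_pr qc qA.
  by rewrite sqrf_eq1 => /orP[] /eqP; lia.
move: qA; rewrite qc (eqP t2) [RHS]addrC => /(addrI 1) /eqP.
by rewrite eqf_sqr => /orP[] /eqP; lia.
Qed.

Lemma natr_card (R : finNzRingType) : #|R|%:R = 0 :> R.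
Proof.
apply: (@addrI _ (\sum_(x : R) x)); rewrite addr0 [in RHS](reindex_inj (addIr 1)) /=.
by rewrite big_split /= sumr_const.
Qed.

Lemma card_rootsXn_le (R : finIdomainType) (k : nat) (c : R) :
  (0 < k)%N -> (#|[set x : R | x ^+ k == c]| <= k)%N.
Proof.
move=> k_gt0; have := @max_poly_roots _ ('X^k - c%:P) (enum [set x : R | x ^+ k == c]).
rewrite size_XnsubC // cardE ltnS; apply.
- by rewrite -size_poly_eq0 size_XnsubC.
- by apply/allP => x; rewrite mem_enum inE /root !hornerE subr_eq0.
- exact: enum_uniq.
Qed.

Lemma sumr_indicator (R : pzSemiRingType) (T : finType) (P : pred T) :
  \sum_(x : T) (P x)%:R = #|P|%:R :> R.
Proof.
rewrite (eq_bigr (fun x => if P x then 1 else 0)) => [|x _]; last by case: (P x).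
by rewrite -big_mkcond sumr_const.
Qed.

Lemma sumr_delta (R : pzSemiRingType) (T : finType) (G : T -> R) (x : T) :
  \sum_(y : T) G y * (y == x)%:R = G x.
Proof.
by rewrite (bigD1 x) //= eqxx mulr1 big1 ?addr0 // => y /negbTE ->; rewrite mulr0.
Qed.

Lemma card_ec_points (F : finFieldType) (a b : F) :
  #|ec_points a b| =
    (1 + \sum_(x : F) #|[set y : F | (y ^+ 2 == x ^+ 3 + a * x + b)%R]|)%N.
Proof.
set B := [set xy : F * F | xy.2 ^+ 2 == xy.1 ^+ 3 + a * xy.1 + b].
have -> : ec_points a b = None |: (Some @: B).
  apply/setP => [[[x y]|]]; rewrite !inE //=.
  apply/idP/imsetP => [xy_on | [[x' y'] xy_on [-> ->]]]; last by rewrite inE in xy_on.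
  by exists (x, y); rewrite ?inE.
rewrite cardsU1 card_imset; last by move=> ? ? [].
rewrite (_ : None \notin _); last by apply/imsetP => [[]].
congr (1 + _)%N; rewrite -sum1_card.
under [RHS]eq_bigr => x _ do rewrite -sum1_card.
by rewrite pair_big_dep; apply: eq_bigl => -[x y]; rewrite !inE.
Qed.

Section QuadraticCharacter.

Variables (F : finFieldType) (m : nat).
Hypothesis card_F : #|F| = (2 * m).+1.

Let two_neq0 : 2%:R != 0 :> F.
Proof.
apply/eqP => two0; have /eqP := natr_card F.
by rewrite card_F -addn1 natrD natrM two0 mul0r add0r oner_eq0.
Qed.

Let m_gt0 : (0 < m)%N.
Proof. by have := finNzRing_gt1 F; rewrite card_F ltnS muln_gt0. Qed.

Let oner_neqN1 : (1 : F) != -1.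
Proof. by rewrite -subr_eq0 opprK. Qed.

Let oppr_neq (x : F) : x != 0 -> x != - x.
Proof. by move=> x0; rewrite -subr_eq0 opprK -mulr2n -mulr_natr mulf_neq0. Qed.

Lemma card_nonzero : #|[set x : F | x != 0]| = (2 * m)%N.
Proof.
by rewrite -[RHS]/((2 * m).+1.-1) -card_F -(cardC1 0); apply: eq_card => x; rewrite inE.
Qed.

Lemma expf_2m (x : F) : x != 0 -> x ^+ (2 * m) = 1.
Proof. by move=> x0; apply: (mulfI x0); rewrite mulr1 -exprS -card_F expf_card. Qed.

Lemma expf_m_cases (x : F) : x != 0 -> x ^+ m = 1 \/ x ^+ m = -1.
Proof.
move=> x0; have : (x ^+ m - 1) * (x ^+ m + 1) = 0.
  by rewrite -subr_sqr expr1n -exprM mulnC expf_2m // subrr.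
by move/eqP; rewrite mulf_eq0 subr_eq0 addr_eq0 => /orP[] /eqP; [left | right].
Qed.

Definition qchar (x : F) : int :=
  if x == 0 then 0 else if x ^+ m == 1 then 1 else -1.

Lemma qchar0 : qchar 0 = 0.
Proof. by rewrite /qchar eqxx. Qed.

Lemma qchar_expm1 (x : F) : x != 0 -> x ^+ m = 1 -> qchar x = 1.
Proof. by move=> x0 xm; rewrite /qchar (negbTE x0) xm eqxx. Qed.

Lemma qchar_expmN1 (x : F) : x ^+ m = -1 -> qchar x = -1.
Proof.
move=> xm; rewrite /qchar xm [-1 == _]eq_sym (negbTE oner_neqN1); case: eqP => // x0.
by move/eqP: xm; rewrite x0 expr0n gtn_eqF // eq_sym oppr_eq0 oner_eq0.
Qed.

Lemma qchar_cases (x : F) : x != 0 -> qchar x = 1 \/ qchar x = -1.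
Proof.
move=> x0; have [xm | xm] := expf_m_cases x0.
  by left; apply: qchar_expm1.
by right; apply: qchar_expmN1.
Qed.

Lemma qcharM (x y : F) : qchar (x * y) = qchar x * qchar y.
Proof.
have [-> | x0] := eqVneq x 0; first by rewrite mul0r qchar0 mul0r.
have [-> | y0] := eqVneq y 0; first by rewrite mulr0 qchar0 mulr0.
have xy0 : x * y != 0 by rewrite mulf_neq0.
have [xm | xm] := expf_m_cases x0; have [ym | ym] := expf_m_cases y0.
- rewrite (qchar_expm1 x0 xm) (qchar_expm1 y0 ym) (qchar_expm1 xy0) //.
  by rewrite exprMn xm ym mulr1.
- rewrite (qchar_expm1 x0 xm) (qchar_expmN1 ym) (@qchar_expmN1 (x * y)) //.
  by rewrite exprMn xm ym mul1r.
- rewrite (qchar_expmN1 xm) (qchar_expm1 y0 ym) (@qchar_expmN1 (x * y)) //.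
  by rewrite exprMn xm ym mulr1.
- rewrite (qchar_expmN1 xm) (qchar_expmN1 ym) (qchar_expm1 xy0) //.
  by rewrite exprMn xm ym mulrNN mulr1.
Qed.

Lemma qchar_sqr (x : F) : x != 0 -> qchar (x ^+ 2) = 1.
Proof. by move=> x0; rewrite qchar_expm1 ?expf_neq0 // -exprM expf_2m. Qed.

Lemma sqr_qchar (x : F) : qchar x ^+ 2 = (x != 0)%:R.
Proof.
have [-> | x0] := eqVneq x 0; first by rewrite qchar0 expr0n.
by have [-> | ->] := qchar_cases x0.
Qed.

Lemma qchar1 : qchar 1 = 1.
Proof. by rewrite -(expr1n F 2) qchar_sqr ?oner_neq0. Qed.

Lemma qcharV (x : F) : qchar x^-1 = qchar x.
Proof.
have [-> | x0] := eqVneq x 0; first by rewrite invr0.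
have : qchar x * qchar x^-1 = 1 by rewrite -qcharM mulfV // qchar1.
by have [-> | ->] := qchar_cases x0; have [-> | ->] := qchar_cases (invr_neq0 x0).
Qed.

Lemma exists_nonsquare : exists r : F, qchar r = -1.
Proof.
case: (boolP [exists r, qchar r == -1]) => [/existsP[r /eqP] | ]; first by exists r.
rewrite negb_exists => /forallP all_res.
suff : ((2 * m)%N <= m)%N by rewrite leqNgt -[ltnLHS]mul1n ltn_pmul2r.
rewrite -card_nonzero; apply: leq_trans (card_rootsXn_le (1 : F) m_gt0).
apply/subset_leq_card/subsetP => x; rewrite !inE => x0.
have [-> // | /qchar_expmN1 xN] := expf_m_cases x0.
by have := all_res x; rewrite xN eqxx.
Qed.

Lemma sum_qchar : \sum_(x : F) qchar x = 0.
Proof.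
have [r r_nonsq] := exists_nonsquare.
have r0 : r != 0 by apply: contra_eq_neq r_nonsq => ->; rewrite qchar0.
have : \sum_(x : F) qchar x = - \sum_(x : F) qchar x.
  rewrite {1}(reindex_inj (mulfI r0)) /= -sumrN.
  by apply: eq_bigr => x _; rewrite qcharM r_nonsq mulN1r.
by move/eqP; rewrite -addr_eq0 -mulr2n -mulr_natr mulf_eq0 orbF => /eqP.
Qed.

Lemma exists_sqrt_qchar1 (x : F) : qchar x = 1 -> exists c, c ^+ 2 = x.
Proof.
move=> x_res; have x0 : x != 0 by apply: contra_eq_neq x_res => ->; rewrite qchar0.
set S := (fun c : F => c ^+ 2) @: [set c : F | c != 0].
set R := [set y : F | y ^+ m == 1].
have : x \in R.
  by rewrite inE; have [-> // | /qchar_expmN1] := expf_m_cases x0; rewrite x_res.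
(* The nonzero squares are roots of 'X^m - 1, and squaring is at most 2-to-1. *)
suff -> : R = S by case/imsetP => c _ ->; exists c.
have SR : S \subset R.
  apply/subsetP => y /imsetP[c]; rewrite inE => c0 ->.
  by rewrite inE -exprM expf_2m.
apply/esym/eqP; rewrite eqEcard SR (leq_trans (card_rootsXn_le 1 m_gt0)) //.
rewrite -(leq_pmul2l (isT : (0 < 2)%N)) -card_nonzero -sum1_card.
rewrite (partition_big_imset (fun c : F => c ^+ 2)) /= -/S mulnC -sum_nat_const.
apply: leq_sum => y _; apply: leq_trans (card_rootsXn_le y (isT : (0 < 2)%N)).
rewrite sum1dep_card subset_leq_card //; apply/subsetP => c.
by rewrite !inE => /andP[].
Qed.

Lemma card_sqrt (c : F) : #|[set y : F | y ^+ 2 == c]|%:Z = 1 + qchar c.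
Proof.
have [-> | c0] := eqVneq c 0.
  rewrite qchar0 addr0 (_ : [set y : F | y ^+ 2 == 0] = [set 0]) ?cards1 //.
  by apply/setP => y; rewrite !inE sqrf_eq0.
have [c_res | c_nonsq] := qchar_cases c0.
  have [r rc] := exists_sqrt_qchar1 c_res.
  have r0 : r != 0 by apply: contra_neq c0 => r0; rewrite -rc r0 expr0n.
  rewrite c_res (_ : [set y : F | y ^+ 2 == c] = [set r; - r]) ?cards2 ?oppr_neq //.
  by apply/setP => y; rewrite !inE -rc eqf_sqr.
rewrite c_nonsq subrr (_ : [set y : F | y ^+ 2 == c] = set0) ?cards0 //.
apply/setP => y; rewrite !inE; apply/negP => /eqP yc.
have y0 : y != 0 by apply: contra_neq c0 => y0; rewrite -yc y0 expr0n.
by move: c_nonsq; rewrite -yc qchar_sqr.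
Qed.

Lemma sum_qcharMD (k : F) :
  \sum_(a : F) qchar a * qchar (a + k) = #|F|%:R * (k == 0)%:R - 1.
Proof.
have [-> | k0] := eqVneq k 0.
  under eq_bigr do rewrite addr0 -expr2 sqr_qchar.
  by rewrite sumr_indicator -cardsE card_nonzero card_F mulr1 -natr1 addrK.
(* For a != 0, chi(a) chi(a + k) = chi(1 + k / a), and a |-> 1 + k / a maps
   F^* onto F minus {1}. *)
rewrite (eq_bigr (fun a => qchar (1 + k * a^-1) - (a == 0)%:R)); last first.
  move=> a _; have [-> | a0] := eqVneq a 0.
    by rewrite qchar0 mul0r invr0 mulr0 addr0 qchar1 subrr.
  by rewrite subr0 -qcharV -qcharM; congr qchar; field.
rewrite sumrB sumr_indicator card1 (reindex_inj invr_inj) /=.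
under eq_bigr do rewrite invrK.
have k_aff : injective (fun a : F => 1 + k * a) by move=> a b /addrI /(mulfI k0).
have -> : \sum_(a : F) qchar (1 + k * a) = \sum_(a : F) qchar a.
  by rewrite [RHS](reindex_inj k_aff).
by rewrite sum_qchar mulr0 !sub0r.
Qed.

Lemma sum_qchar_shift (c d : F) :
  \sum_(a : F) qchar (c + a) * qchar (d + a) = #|F|%:R * (c == d)%:R - 1.
Proof.
rewrite (reindex_inj (addrI (- c))) /=.
have -> : (c == d) = (d - c == 0) by rewrite subr_eq0 eq_sym.
rewrite -sum_qcharMD; apply: eq_bigr => a _.
by rewrite addNKr; congr (_ * qchar _); ring.
Qed.

Lemma sum_qchar_comp (g : F -> F) : \sum_(x : F) qchar (g x) =
  #|[set x | g x != 0]|%:R - 2 * #|[set x | qchar (g x) == -1]|%:R.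
Proof.
rewrite !cardsE -!sumr_indicator mulr_sumr -sumrB; apply: eq_bigr => x _.
have [-> | gx0] := eqVneq (g x) 0; first by rewrite qchar0.
by have [-> | ->] := qchar_cases gx0.
Qed.

Definition jacobsthal (a : F) : int := \sum_(x : F) qchar x * qchar (x ^+ 2 + a).

Lemma jacobsthal0 : jacobsthal 0 = 0.
Proof.
rewrite /jacobsthal -[RHS]sum_qchar; apply: eq_bigr => x _.
rewrite addr0; have [-> | x0] := eqVneq x 0; first by rewrite qchar0 mul0r.
by rewrite qchar_sqr // mulr1.
Qed.

Lemma jacobsthalZ (a c : F) : c != 0 -> jacobsthal (a * c ^+ 2) = qchar c * jacobsthal a.
Proof.
move=> c0; rewrite /jacobsthal (reindex_inj (mulfI c0)) /= mulr_sumr; apply: eq_bigr => x _.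
have -> : (c * x) ^+ 2 + a * c ^+ 2 = c ^+ 2 * (x ^+ 2 + a) by ring.
by rewrite [qchar (c ^+ 2 * _)]qcharM qchar_sqr // qcharM; ring.
Qed.

Lemma card_ec_points_jacobsthal (a : F) :
  #|ec_points a 0|%:Z = 1 + #|F|%:Z + jacobsthal a.
Proof.
rewrite card_ec_points -natz natrD natr_sum.
under eq_bigr do rewrite natz addr0 card_sqrt.
rewrite big_split /= sumr_const addrA; congr (_ + _); first by rewrite -[#|F|%:Z]natz.
by apply: eq_bigr => x _; rewrite -qcharM; congr qchar; ring.
Qed.

Definition nonsq_x3_x := [set x : F | qchar (x ^+ 3 - x) == -1].

Lemma jacobsthalN1 : jacobsthal (-1) = #|F|%:R - 3 - 2 * #|nonsq_x3_x|%:R.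
Proof.
have -> : jacobsthal (-1) = \sum_(x : F) qchar (x ^+ 3 - x).
  by apply: eq_bigr => x _; rewrite -qcharM; congr qchar; ring.
rewrite sum_qchar_comp; congr (_ - _).
have roots : ~: [set x : F | x ^+ 3 - x != 0] = [set x in [:: 0; 1; -1]].
  apply/setP => x; rewrite !inE negbK.
  have -> : x ^+ 3 - x = x * (x - 1) * (x + 1) by ring.
  by rewrite !mulf_eq0 subr_eq0 addr_eq0 -orbA.
have card_roots : #|[set x : F in [:: 0; 1; -1]]| = 3.
  rewrite cardsE; apply/card_uniqP.
  by rewrite /= !inE oner_neqN1 eq_sym oner_eq0 eq_sym oppr_eq0 oner_eq0.
have := cardsC [set x : F | x ^+ 3 - x != 0].
rewrite roots card_roots => <-.
by rewrite natrD addrK.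
Qed.

Hypothesis m_even : ~~ odd m.

Lemma qcharN1 : qchar (-1) = 1.
Proof. by rewrite qchar_expm1 ?oppr_eq0 ?oner_eq0 // -signr_odd (negbTE m_even). Qed.

Lemma qcharN (x : F) : qchar (- x) = qchar x.
Proof. by rewrite -mulN1r qcharM qcharN1 mul1r. Qed.

Lemma sum_qcharM_sqr_eq (x : F) :
  \sum_(y : F) qchar x * qchar y * (x ^+ 2 == y ^+ 2)%:R = 2 * (x != 0)%:R.
Proof.
have [-> | x0] := eqVneq x 0.
  by rewrite qchar0 big1 ?mulr0 // => y _; rewrite !mul0r.
rewrite (eq_bigr (fun y =>
  qchar x * qchar y * (y == x)%:R + qchar x * qchar y * (y == - x)%:R)).
  by rewrite big_split /= !sumr_delta qcharN -expr2 sqr_qchar x0.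
move=> y _; rewrite -mulrDr [x ^+ 2 == _]eq_sym eqf_sqr.
have [-> | _] := eqVneq y x; last by rewrite add0r.
by rewrite (negbTE (oppr_neq x0)).
Qed.

Lemma sum_jacobsthal_sqr :
  \sum_(a : F) jacobsthal a ^+ 2 = ((2 * m).+1 * (2 * m) * 2)%:R.
Proof.
have orth (x y : F) :
    \sum_(a : F) qchar x * qchar (x ^+ 2 + a) * (qchar y * qchar (y ^+ 2 + a))
    = #|F|%:R * (qchar x * qchar y * (x ^+ 2 == y ^+ 2)%:R) - qchar x * qchar y.
  by under eq_bigr do rewrite mulrACA; rewrite -mulr_sumr sum_qchar_shift; ring.
under eq_bigr do rewrite expr2 /jacobsthal mulr_suml.
under eq_bigr do under eq_bigr do rewrite mulr_sumr.
rewrite exchange_big /=; under eq_bigr do rewrite exchange_big /=.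
under eq_bigr do under eq_bigr do rewrite orth.
under eq_bigr do
  rewrite sumrB -mulr_sumr sum_qcharM_sqr_eq -mulr_sumr sum_qchar mulr0 subr0.
by rewrite -!mulr_sumr sumr_indicator -cardsE card_nonzero card_F !natrM; ring.
Qed.

Lemma jacobsthal_sqr_class (r a : F) : qchar r = -1 -> jacobsthal a ^+ 2 =
  (qchar a == 1)%:R * jacobsthal (-1) ^+ 2 + (qchar a == -1)%:R * jacobsthal r ^+ 2.
Proof.
move=> r_nonsq; have r0 : r != 0 by apply: contra_eq_neq r_nonsq => ->; rewrite qchar0.
have [-> | a0] := eqVneq a 0; first by rewrite jacobsthal0 qchar0 expr0n !mul0r addr0.
have [a_res | a_nonsq] := qchar_cases a0; rewrite ?a_res ?a_nonsq /=.
- have [c ca] : exists c, c ^+ 2 = - a by apply: exists_sqrt_qchar1; rewrite qcharN.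
  have c0 : c != 0.
    by apply: contra_neq a0 => c0; apply/eqP; rewrite -oppr_eq0 -ca c0 expr0n.
  have -> : a = -1 * c ^+ 2 by rewrite ca mulN1r opprK.
  by rewrite jacobsthalZ // exprMn sqr_qchar c0 mul1r mul0r addr0.
- have [c ca] : exists c, c ^+ 2 = a / r.
    by apply: exists_sqrt_qchar1; rewrite qcharM qcharV a_nonsq r_nonsq.
  have c0 : c != 0.
    by apply: contra_neq a0 => c0; rewrite -[a](divfK r0) -ca c0 expr0n mul0r.
  have -> : a = r * c ^+ 2 by rewrite ca mulrC divfK.
  by rewrite jacobsthalZ // exprMn sqr_qchar c0 mul1r mul0r add0r.
Qed.

Lemma card_squares_nonsquares :
  #|[set a : F | qchar a == 1]| = m /\ #|[set a : F | qchar a == -1]| = m.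
Proof.
have sum_split (G : int -> int) : G 0 = 0 -> \sum_(a : F) G (qchar a) =
    #|[set a : F | qchar a == 1]|%:R * G 1 + #|[set a : F | qchar a == -1]|%:R * G (-1).
  move=> G0; rewrite !cardsE -!sumr_indicator !mulr_suml -big_split /=.
  apply: eq_bigr => a _.
  have [-> | a0] := eqVneq a 0; first by rewrite qchar0 G0 !mul0r addr0.
  by have [-> | ->] := qchar_cases a0; rewrite ?mul1r ?mul0r ?addr0 ?add0r.
have := sum_split (fun e => e ^+ 2) (expr0n _ 2).
have := sum_split id erefl; rewrite sum_qchar.
under eq_bigr do rewrite sqr_qchar.
rewrite sumr_indicator -(cardsE (fun x : F => x != 0)) card_nonzero.
by rewrite expr1n sqrrN expr1n !mulr1 mulrN1 !natz; lia.
Qed.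

Lemma jacobsthal_sqrD (r : F) : qchar r = -1 ->
  jacobsthal (-1) ^+ 2 + jacobsthal r ^+ 2 = (4 * (2 * m).+1)%:R.
Proof.
move=> r_nonsq; have := sum_jacobsthal_sqr.
under eq_bigr do rewrite (jacobsthal_sqr_class _ r_nonsq).
rewrite big_split /= -!mulr_suml !sumr_indicator.
rewrite -(cardsE (fun a => qchar a == 1)) -(cardsE (fun a => qchar a == -1)).
have [-> ->] := card_squares_nonsquares; rewrite -mulrDr => sum_eq.
apply: (@mulfI _ m%:R); first by rewrite pnatr_eq0 -lt0n.
by rewrite sum_eq !natrM; ring.
Qed.

Lemma nonsq_x3_xN (x : F) : (- x \in nonsq_x3_x) = (x \in nonsq_x3_x).
Proof. by rewrite !inE -qcharN; congr (qchar _ == _); ring. Qed.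

Lemma nonsq_x3_xV (x : F) : (x^-1 \in nonsq_x3_x) = (x \in nonsq_x3_x).
Proof.
have [-> | x0] := eqVneq x 0; first by rewrite invr0.
rewrite !inE; have -> : x^-1 ^+ 3 - x^-1 = - (x ^+ 3 - x) * (x ^- 2) ^+ 2 by field.
by rewrite qcharM qcharN qchar_sqr ?mulr1 // invr_eq0 expf_neq0.
Qed.

Lemma nonsq_x3_x_neq (x : F) :
  x \in nonsq_x3_x -> [/\ x != 0, x ^+ 2 != 1 & x ^+ 2 != -1].
Proof.
rewrite inE => /eqP x_nonsq.
have x3_neq0 : x ^+ 3 - x != 0 by apply: contra_eq_neq x_nonsq => ->; rewrite qchar0.
have x3E : x ^+ 3 - x = x * (x ^+ 2 - 1) by ring.
split; [by apply: contra_neq x3_neq0 => x0; rewrite x3E x0 mul0r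
       | by apply: contra_neq x3_neq0 => x2; rewrite x3E x2 subrr mulr0 |].
apply/eqP => x2.
have x1 : 1 - x != 0.
  by rewrite subr_eq0; apply: contra_eq_neq x2 => <-; rewrite expr1n.
suff : qchar (x ^+ 3 - x) = 1 by rewrite x_nonsq => /eqP.
have -> : x ^+ 3 - x = (1 - x) ^+ 2.
  have -> : (1 - x) ^+ 2 = x ^+ 2 + 1 - 2%:R * x by ring.
  by rewrite x3E x2; ring.
exact: qchar_sqr.
Qed.

Lemma sqr_add_sqrV_eq (x y : F) : x != 0 -> y != 0 ->
  (y ^+ 2 + y ^- 2 == x ^+ 2 + x ^- 2) = (y \in [:: x; - x; x^-1; - x^-1]).
Proof.
move=> x0 y0.
have -> : (y ^+ 2 + y ^- 2 == x ^+ 2 + x ^- 2) =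
    ((y ^+ 2 - x ^+ 2) * (1 - (x * y) ^- 2) == 0).
  by rewrite -subr_eq0; congr (_ == 0); field; rewrite x0 y0.
rewrite mulf_eq0 subr_eq0 eqf_sqr subr_eq0 [1 == _]eq_sym invr_eq1 sqrf_eq1 !inE -!orbA.
by rewrite -[y == x^-1](inj_eq (mulfI x0)) -[y == - x^-1](inj_eq (mulfI x0)) mulrN mulfV.
Qed.

Lemma dvd4_card_nonsq_x3_x : (4 %| #|nonsq_x3_x|)%N.
Proof.
(* The fibres of h on nonsq_x3_x are the orbits {x, -x, 1/x, -1/x}. *)
pose h (x : F) := x ^+ 2 + x ^- 2.
rewrite -sum1_card (partition_big_imset h) /=.
apply: dvdn_sum => _ /imsetP[x xX ->].
have [x0 x2N1 x2NN1] := nonsq_x3_x_neq xX.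
have -> : (\sum_(y in nonsq_x3_x | h y == h x) 1)%N = #|[:: x; - x; x^-1; - x^-1]|.
  rewrite sum1dep_card; apply: eq_card => y; rewrite inE.
  apply/andP/idP => [[/nonsq_x3_x_neq[y0 _ _]] | y_orbit].
    by rewrite /h sqr_add_sqrV_eq.
  have y0 : y != 0.
    by move: y_orbit; rewrite !inE => /or4P[] /eqP ->; rewrite ?oppr_eq0 ?invr_eq0.
  split; last by rewrite /h sqr_add_sqrV_eq.
  rewrite !inE in y_orbit.
  by case/or4P: y_orbit => /eqP ->; rewrite ?nonsq_x3_xN ?nonsq_x3_xV.
have xVx : (x == x^-1) = (x ^+ 2 == 1) by rewrite -(inj_eq (mulfI x0)) mulfV.
have xNVx : (x == - x^-1) = (x ^+ 2 == -1) by rewrite -(inj_eq (mulfI x0)) mulrN mulfV.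
rewrite (card_uniqP _) //= !inE !negb_or eqr_opp eqr_oppLR xVx xNVx.
by rewrite x2N1 x2NN1 !oppr_neq ?invr_neq0.
Qed.

End QuadraticCharacter.

Theorem card_ec_points_x3_minus_x (F : finFieldType) (c : nat) :
  prime #|F| -> #|F| = ((4 * c) ^ 2).+1 -> #|ec_points (-1 : F) 0| = ((4 * c) ^ 2)%N.
Proof.
move=> F_pr cardF.
pose m := (8 * c ^ 2)%N.
have card_F : #|F| = (2 * m).+1 by rewrite cardF /m expnMn mulnA.
have m_even : ~~ odd m by rewrite oddM.
have [r r_nonsq] := exists_nonsquare card_F.
have [j card_nonsq] := dvdnP (dvd4_card_nonsq_x3_x card_F m_even).
have jacobsthalN1_eq : jacobsthal m (-1 : F) = -2.
  apply: (@sum_sqr_4prime_eqN2 #|F| (2 * c)%:Z _ (jacobsthal m r)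
                               (2 * (c ^ 2)%:Z - j%:Z)) => //.
  - by rewrite cardF; lia.
  - by rewrite (jacobsthal_sqrD card_F m_even r_nonsq) card_F natrM !natz.
  - by rewrite (jacobsthalN1 card_F) card_nonsq cardF !natz; lia.
have := card_ec_points_jacobsthal card_F (-1).
by rewrite jacobsthalN1_eq cardF; lia.
Qed.

Close Scope ring_scope.

Theorem corollary3 (p n : nat) :
  0 < p -> 0 < n -> prime (p ^ 2 * 16 ^ n + 1) ->
  #|ec_points (F := 'F_(p ^ 2 * 16 ^ n + 1)) (-1)%R 0%R| = p ^ 2 * 16 ^ n.
Proof.
move=> p_gt0 n_gt0 q_pr.
have q_sqr : p ^ 2 * 16 ^ n = (4 * (p * 4 ^ n.-1)) ^ 2.
  by rewrite mulnCA -expnS prednK // expnMn expnAC.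
rewrite [RHS]q_sqr; apply: card_ec_points_x3_minus_x; rewrite card_Fp //.
by rewrite -q_sqr addn1.
Qed.
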